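(* Let $V$ be a space. (i) $V$ is CM if and only if $V$ is homothetic to $\mathbb{Q}(\sqrt{-d})$ for some squarefree positive integer $d$. (ii) For a squarefree positive integer $d\neq 1,3$, the rational angles in $\mathbb{Q}(\sqrt{-d})$ are, up to equivalence, precisely those of the form $(v,\sqrt{-d}\,v)$ with $v\in\mathbb{Q}(\sqrt{-d})\setminus\{0\}$. (iii) The rational angles in $\mathbb{Q}(i)$ are, up to equivalence, precisely those of the form $(v,\lambda v)$ with $v\in\mathbb{Q}(i)\setminus\{0\}$ and $\lambda\in\{i,i+1,i-1\}$. (iv) The rational angles in $\mathbb{Q}(\sqrt{-3})$ are, up to equivalence, precisely those of the form $(v,\lambda v)$ with $v\in\mathbb{Q}(\sqrt{-3})\setminus\{0\}$ and $\lambda\in\{\sqrt{-3},\zeta,\zeta-1,\zeta+1,\zeta+2\}$, where $\zeta=\frac{-1+\sqrt{-3}}{2}$.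
   Context: A space is a $2$-dimensional $\mathbb{Q}$-vector subspace $V\subset\mathbb{C}$ containing two $\mathbb{R}$-linearly independent vectors. Spaces $V_1,V_2$ are homothetic if $V_2=\lambda V_1$ for some $\lambda\in\mathbb{C}^*$. $V$ is CM (has complex multiplication) if there is $\lambda\in\mathbb{C}\setminus\mathbb{Q}$ with $\lambda V\subseteq V$. A rational angle of $V$ is an ordered pair of distinct lines $(\mathbb{R}v_1,\mathbb{R}v_2)$, written $(v_1,v_2)$, with $v_1,v_2\in V\setminus\{0\}$, $v_2/v_1\notin\mathbb{R}$ and $\arg(v_2/v_1)\in\mathbb{Q}\pi$. Two rational angles are equivalent if one is obtained from the other by swapping the two lines. *)

From mathcomp Require Import all_boot all_algebra.
From mathcomp Require Import reals trigo.
From mathcomp Require Export complex.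
Set Implicit Arguments. Unset Strict Implicit. Unset Printing Implicit Defensive.
Import GRing.Theory Num.Theory.
Local Open Scope ring_scope.
Local Open Scope complex_scope.

Section Defs.
Variable R : realType.
Local Notation C := R[i].

Definition is_realC (z : C) : Prop := exists r : R, z = r%:C.

Definition R_indep (u w : C) : Prop :=
  forall a b : R, a%:C * u + b%:C * w = 0 -> a = 0 /\ b = 0.
Definition Q_indep (u w : C) : Prop :=
  forall a b : rat, ratr a * u + ratr b * w = 0 -> a = 0 /\ b = 0.

(* A space: a 2-dimensional Q-vector subspace of C (the Q-span of two
   Q-independent vectors) containing two R-linearly independent vectors. *)
Definition is_space (V : C -> Prop) : Prop :=
  (exists e1 e2 : C, Q_indep e1 e2 /\
     forall z, V z <-> exists a b : rat, z = ratr a * e1 + ratr b * e2) /\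
  (exists u w : C, V u /\ V w /\ R_indep u w).

Definition homothetic (V1 V2 : C -> Prop) : Prop :=
  exists l : C, l != 0 /\ forall z, V2 z <-> exists y, V1 y /\ z = l * y.

Definition is_CM (V : C -> Prop) : Prop :=
  exists l : C, (forall q : rat, l <> ratr q) /\ forall z, V z -> V (l * z).

Definition iC : C := 0 +i* 1.

(* sqrt(-d) = i * sqrt d *)
Definition sqrtm (d : nat) : C := 0 +i* Num.sqrt (d%:R : R).

Definition Qsqrtm (d : nat) : C -> Prop :=
  fun z => exists a b : rat, z = ratr a + ratr b * sqrtm d.

Definition line (v : C) : C -> Prop := fun z => exists r : R, z = r%:C * v.

Definition rational_arg (w : C) : Prop :=
  exists (q : rat) (r : R), 0 < r /\
    w = r%:C * (cos (ratr q * pi) +i* sin (ratr q * pi)).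

Definition rational_angle (V : C -> Prop) (L1 L2 : C -> Prop) : Prop :=
  L1 <> L2 /\
  exists v1 v2 : C, V v1 /\ V v2 /\ v1 != 0 /\ v2 != 0 /\
    L1 = line v1 /\ L2 = line v2 /\
    ~ is_realC (v2 / v1) /\ rational_arg (v2 / v1).

Definition angle_of_form (V : C -> Prop) (Lam : C -> Prop) (L1 L2 : C -> Prop)
  : Prop :=
  exists v l : C, V v /\ v != 0 /\ Lam l /\
    ((L1 = line v /\ L2 = line (l * v)) \/ (L1 = line (l * v) /\ L2 = line v)).

End Defs.

Definition squarefree (d : nat) : Prop := forall p : nat, prime p -> ~~ (p * p %| d)%N.

(* If lambda V is contained in V for some lambda outside Q, writing lambda e1 and lambda e2
   in a basis (e1, e2) of V shows that tau = e2 / e1 is a root of a rational quadratic.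
   Completing the square gives (b tau + r)^2 = D with D rational.  If D >= 0 then tau is
   real and V lies on the real line through e1; otherwise -D = d k^2 with d squarefree, so
   tau lies in Q(sqrt(-d)) \ Q and V = e1 Q(sqrt(-d)).  Conversely sqrt(-d) preserves
   Q(sqrt(-d)).

   A rational angle of a field K is a pair of lines (R v, R w v) with v in K and w in K
   non-real of argument theta in Q pi.  For w = a + b sqrt(-d) the number
   2 cos (2 theta) = 2 (a^2 - d b^2) / (a^2 + d b^2) is rational, so by Niven's theorem it is
   one of -2, -1, 0, 1, 2.  This leaves a = 0, 3 a^2 = d b^2, a^2 = d b^2 or a^2 = 3 d b^2,
   and as d is squarefree the last three force d = 1 or d = 3; the solutions w are then real
   multiples of the listed lambda. *)

From mathcomp Require Import all_boot all_order all_algebra.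
From mathcomp Require Import reals trigo.
From mathcomp Require Import complex.
From mathcomp Require Import ring lra zify boolp.
Set Implicit Arguments.
Unset Strict Implicit.
Unset Printing Implicit Defensive.
Import Order.TTheory GRing.Theory Num.Theory.
Local Open Scope ring_scope.
Local Open Scope complex_scope.

Lemma squarefree1 : squarefree 1.
Proof. by move=> p /prime_gt1 p_gt1; rewrite dvdn1 muln_eq1; case: p p_gt1 => [|[]]. Qed.

Lemma squarefree3 : squarefree 3.
Proof.
move=> p /prime_gt1 p_gt1; apply/negP => /(dvdn_leq (isT : (0 < 3)%N)); nia.
Qed.

Lemma squarefree_sqr_dvd d k : (0 < d)%N -> squarefree d -> (k * k %| d)%N -> k = 1%N.
Proof.
move=> d_gt0 sf_d; case: k => [|[|k]] // kk_d.
  by move: kk_d d_gt0; rewrite dvd0n => /eqP->.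
have /sf_d/negP[] := pdiv_prime (isT : (1 < k.+2)%N).
by apply: dvdn_trans kk_d; rewrite dvdn_mul ?pdiv_dvd.
Qed.

Lemma rat_sqr_natr (x : rat) (n : nat) : x ^+ 2 = n%:R -> exists m, (m * m)%N = n.
Proof.
move=> x2n; exists `|numq x|%N.
have den_gt0 := denq_gt0 x.
have num2 : numq x ^+ 2 = n%:R * denq x ^+ 2.
  apply: (@intr_inj rat); rewrite [RHS]rmorphM /= !rmorphXn rmorph_nat -x2n.
  rewrite -{2}(divq_num_den x) expr_div_n divfK //.
  by rewrite expf_neq0 // intr_eq0 gt_eqF.
have {}num2 : (`|numq x| ^ 2 = n * `|denq x| ^ 2)%N.
  by have := congr1 absz num2; rewrite abszM !abszX natz.
have den_dvd : (`|denq x| %| `|numq x| ^ 2)%N by rewrite num2 dvdn_mull // dvdn_exp.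
have : coprime `|denq x| (`|numq x| ^ 2).
  by rewrite coprimeXr // coprime_sym coprime_num_den.
rewrite /coprime (gcdn_idPl den_dvd) => /eqP den1.
by rewrite mulnn num2 den1 exp1n muln1.
Qed.

Lemma rat_sqr_squarefree d (x : rat) :
  (0 < d)%N -> squarefree d -> x ^+ 2 = d%:R -> d = 1%N.
Proof.
move=> d_gt0 sf_d /rat_sqr_natr[m mm_d].
have m1 : m = 1%N by apply: (squarefree_sqr_dvd d_gt0 sf_d); rewrite mm_d.
by rewrite -mm_d m1.
Qed.

Lemma rat_sqr_3squarefree d (x : rat) :
  (0 < d)%N -> squarefree d -> x ^+ 2 = (3 * d)%:R -> d = 3%N.
Proof.
move=> d_gt0 sf_d /rat_sqr_natr[m mm_3d].
have /dvdnP[k m_eq] : (3 %| m)%N.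
  by rewrite -[(3 %| m)%N]orbb -Euclid_dvdM // mm_3d dvdn_mulr.
have kk_d : (k * k * 3 = d)%N by rewrite m_eq in mm_3d; nia.
have k1 : k = 1%N by apply: (squarefree_sqr_dvd d_gt0 sf_d); rewrite -kk_d dvdn_mulr.
by rewrite -kk_d k1.
Qed.

Lemma squarefree_decomposition n : (0 < n)%N ->
  exists d j, [/\ (0 < d)%N, squarefree d & n = (d * (j * j))%N].
Proof.
elim/ltn_ind: n => n IHn n_gt0.
have [sf_n|] := pselect (squarefree n); first by exists n, 1%N; rewrite !muln1.
move=> /existsNP[p /not_implyP[p_pr /negP/negPn/dvdnP[n' n_eq]]].
have p_gt1 := prime_gt1 p_pr.
have n'_gt0 : (0 < n')%N by move: n_gt0; rewrite n_eq muln_gt0 => /andP[].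
have [|d [j [d_gt0 sf_d n'_eq]]] := IHn n' _ n'_gt0.
  by rewrite n_eq -[X in (X < _)%N]muln1 ltn_pmul2l // (ltn_mul p_gt1 p_gt1).
by exists d, (j * p)%N; rewrite n_eq n'_eq; split=> //; ring.
Qed.

Lemma rat_squarefree_decomposition (D : rat) : 0 < D ->
  exists d (k : rat), [/\ (0 < d)%N, squarefree d, k != 0 & D = d%:R * k ^+ 2].
Proof.
move=> D_gt0; set p := `|numq D|%N; set s := `|denq D|%N.
have s_gt0 : (0 < s)%N by rewrite absz_gt0 gt_eqF ?denq_gt0.
have p_gt0 : (0 < p)%N by rewrite absz_gt0 gt_eqF ?numq_gt0.
have ps_gt0 : (0 < p * s)%N by rewrite muln_gt0 p_gt0.
have [d [j [d_gt0 sf_d ps_eq]]] := squarefree_decomposition ps_gt0.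
have D_eq : D = p%:R / s%:R.
  by rewrite -[LHS]divq_num_den !natr_absz !gtr0_norm ?numq_gt0 ?denq_gt0.
have j_neq0 : j != 0%N by apply: contraTneq ps_gt0 => j0; rewrite ps_eq j0 !muln0.
exists d, (j%:R / s%:R); split=> //; first by rewrite mulf_neq0 ?invr_eq0 ?pnatr_eq0 // -lt0n.
rewrite D_eq expr_div_n mulrA -natrX -natrM -(mulnn j) -ps_eq natrM.
by field; rewrite pnatr_eq0 -lt0n.
Qed.

Fixpoint cos_num_pair (p s : int) (k : nat) : int * int :=
  if k is k'.+1 then
    ((cos_num_pair p s k').2,
     p * (cos_num_pair p s k').2 - s ^+ 2 * (cos_num_pair p s k').1)
  else (2, p).

Definition cos_num p s k := (cos_num_pair p s k).1.

Lemma cos_numSS p s k :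
  cos_num p s k.+2 = p * cos_num p s k.+1 - s ^+ 2 * cos_num p s k.
Proof. by []. Qed.

Lemma cos_num_congr p s k : (s %| cos_num p s k.+1 - p ^+ k.+1)%Z.
Proof.
elim: k => [|k IHk]; first by rewrite subrr dvdz0.
rewrite cos_numSS exprS.
have -> : p * cos_num p s k.+1 - s ^+ 2 * cos_num p s k - p * p ^+ k.+1 =
          p * (cos_num p s k.+1 - p ^+ k.+1) - s * (s * cos_num p s k) by ring.
by apply: rpredB; [exact: dvdz_mull | exact/dvdz_mulr/dvdzz].
Qed.

Section Niven.
Variable R : realType.

Lemma cos_mulrz_2pi (z : int) : cos ((pi *+ 2) *~ z) = 1 :> R.
Proof.
have cos_mulrn_2pi n : cos ((pi *+ 2) *+ n) = 1 :> R.
  by rewrite -[_ *+ n]add0r (periodicn (@cosD2pi R)) cos0.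
by case: z => n; rewrite ?NegzE ?mulrNz ?cosN cos_mulrn_2pi.
Qed.

Lemma two_cosSS (phi : R) k : 2 * cos (k.+2%:R * phi) =
  2 * cos phi * (2 * cos (k.+1%:R * phi)) - 2 * cos (k%:R * phi).
Proof.
have -> : k.+2%:R * phi = k.+1%:R * phi + phi by rewrite !mulrSr mulrDl mul1r.
have -> : k%:R * phi = k.+1%:R * phi - phi by rewrite mulrSr mulrDl mul1r addrK.
rewrite cosD cosB; ring.
Qed.

Lemma two_cos_mulrnE (phi : R) (p s : int) k : s != 0 ->
  2 * cos phi = p%:~R / s%:~R -> 2 * cos (k%:R * phi) = (cos_num p s k)%:~R / s%:~R ^+ k.
Proof.
move=> s_neq0 cos_phi; have sR_neq0 : s%:~R != 0 :> R by rewrite intr_eq0.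
suff : 2 * cos (k%:R * phi) = (cos_num p s k)%:~R / s%:~R ^+ k /\
       2 * cos (k.+1%:R * phi) = (cos_num p s k.+1)%:~R / s%:~R ^+ k.+1 by case.
elim: k => [|k [IHk IHk1]].
  by rewrite mul0r cos0 mul1r cos_phi /cos_num /= mulr1 expr0 divr1.
split=> //; rewrite two_cosSS IHk1 IHk cos_phi cos_numSS.
rewrite intrD intrM mulrNz intrM rmorphXn /= !exprS.
by field; rewrite sR_neq0 expf_neq0.
Qed.

(* If 2 cos phi = p / s in lowest terms then 2 cos (k phi) = cos_num p s k / s ^ k, and
   cos_num p s k = p ^ k modulo s; for k = 2 denq q the left-hand side is 2, so s
   divides p ^ k, whence s = 1. *)
Lemma denq_two_cos_rat_pi (q t : rat) :
  ratr t = 2 * cos (ratr q * pi) :> R -> denq t = 1.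
Proof.
move=> t_cos; set p := numq t; set s := denq t.
have s_gt0 : 0 < s := denq_gt0 t.
have cos_phi : 2 * cos (ratr q * pi) = p%:~R / s%:~R :> R.
  by rewrite -t_cos -[in LHS](divq_num_den t) fmorph_div !rmorph_int.
set N := (2 * `|denq q|)%N.
have N_gt0 : (0 < N)%N by rewrite muln_gt0 absz_gt0 gt_eqF ?denq_gt0.
have N_phi : N%:R * (ratr q * pi) = (pi *+ 2) *~ numq q :> R.
  rewrite -[in LHS](divq_num_den q) fmorph_div !rmorph_int /N natrM natr_absz.
  rewrite gtr0_norm ?denq_gt0 // -mulrzr -mulr_natr.
  by field; rewrite intr_eq0 gt_eqF ?denq_gt0.
have cos_numN : cos_num p s N = 2 * s ^+ N.
  have := two_cos_mulrnE N (lt0r_neq0 s_gt0) cos_phi.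
  rewrite N_phi cos_mulrz_2pi mulr1 => cosN_eq.
  have sN_neq0 : s%:~R ^+ N != 0 :> R by rewrite expf_neq0 ?intr_eq0 ?lt0r_neq0.
  apply: (@intr_inj R); rewrite intrM rmorphXn /=.
  by rewrite -[LHS](divfK sN_neq0) -cosN_eq.
have s_dvd_pN : (s %| p ^+ N)%Z.
  have := cos_num_congr p s N.-1; rewrite prednK // cos_numN.
  move=> dvd_diff; have -> : p ^+ N = 2 * s ^+ N - (2 * s ^+ N - p ^+ N) by ring.
  by apply: rpredB dvd_diff; exact: (dvdz_mull _ (dvdz_exp N_gt0 (dvdzz s))).
have : coprime `|s| `|p ^+ N| by rewrite abszX coprimeXr // coprime_sym coprime_num_den.
move: s_dvd_pN; rewrite dvdzE /coprime => /gcdn_idPl -> /eqP abs_s1.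
by rewrite -[s]gtz0_abs // abs_s1.
Qed.

Lemma niven (q t : rat) : ratr t = 2 * cos (ratr q * pi) :> R ->
  t = -2 \/ t = -1 \/ t = 0 \/ t = 1 \/ t = 2.
Proof.
move=> t_cos; have t_int : t = (numq t)%:~R.
  by rewrite -[LHS]divq_num_den (denq_two_cos_rat_pi t_cos) divr1.
have : `|numq t| <= 2.
  rewrite -(ler_int R) intr_norm -ratr_int -t_int t_cos normrM.
  by rewrite ger0_norm // -[leRHS]mulr1 ler_pM2l // cos_max.
move: (numq t) t_int => n ->; rewrite ler_norml => /andP[n_ge n_le].
have : n = -2 \/ n = -1 \/ n = 0 \/ n = 1 \/ n = 2 by lia.
by case=> [|[|[|[|]]]] ->;
  [left | right; left | do 2 right; left | do 3 right; left | do 4 right].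
Qed.
End Niven.

Section SpecialAngles.
Variable R : realType.

Lemma sin_piquarter : sin (pi / 4) = cos (pi / 4) :> R.
Proof.
have cos_neq0 : cos (pi / 4) != 0 :> R.
  by rewrite gt_eqF // cos_gt0_pihalf //; have := pi_gt0 R; lra.
by rewrite -[LHS](divfK cos_neq0) -/(tan _) tan_piquarter mul1r.
Qed.

Lemma cos_pithird : cos (pi / 3) = 2^-1 :> R.
Proof.
set x := pi / 3.
have cos_gt0 : 0 < cos x by rewrite cos_gt0_pihalf // /x; have := pi_gt0 R; lra.
have : cos (x *+ 2 + x) = -1 by rewrite -cospi; congr cos; rewrite /x; field.
rewrite cosD cos_mulr2n sin_mulr2n mulrnAl -mulrA -expr2 sin2cos2 => cos3x.
have : (cos x + 1) * (2 * cos x - 1) ^+ 2 = 0.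
  by rewrite -(addNr 1) -[in RHS]cos3x; ring.
move/eqP; rewrite mulf_eq0 expf_eq0 /= => /orP[|]; first by move/eqP; lra.
by rewrite subr_eq0 => /eqP; lra.
Qed.

Lemma sin_pithird : sin (pi / 3) = Num.sqrt 3 / 2 :> R.
Proof.
have sin_ge0 : 0 <= sin (pi / 3) :> R by rewrite sin_ge0_pi //; have := pi_gt0 R; lra.
apply/eqP; rewrite -(eqrXn2 (isT : (0 < 2)%N)) ?divr_ge0 ?sqrtr_ge0 //.
by rewrite sin2cos2 cos_pithird expr_div_n sqr_sqrtr //; apply/eqP; field.
Qed.

End SpecialAngles.

Section ComplexLines.
Variable R : realType.
Local Notation C := R[i].

Lemma is_realCP (z : C) : is_realC z <-> complex.Im z = 0.
Proof. by split=> [[r ->] //|]; case: z => a b /= ->; exists a. Qed.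

Lemma nonreal_neq0 (z : C) : ~ is_realC z -> z != 0.
Proof. by move=> z_nonreal; apply/eqP=> z0; apply: z_nonreal; exists 0; rewrite z0. Qed.

Lemma is_realC_inv (z : C) : is_realC z -> is_realC z^-1.
Proof. by case=> r ->; exists r^-1; rewrite fmorphV. Qed.

Lemma line_scale (c : R) (z : C) : c != 0 -> line (c%:C * z) = line z.
Proof.
move=> c_neq0; apply: funext => y; apply: propext.
split=> -[r ->]; first by exists (r * c); rewrite mulrA -rmorphM.
by exists (r / c); rewrite mulrA -rmorphM divfK.
Qed.

Lemma line_neq (v l : C) : v != 0 -> ~ is_realC l -> line v <> line (l * v).
Proof.
move=> v_neq0 l_nonreal line_eq; apply: l_nonreal; rewrite -[l]invrK.
have [r] : line (l * v) v by rewrite -line_eq; exists 1; rewrite mul1r.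
rewrite mulrA -{1}[v]mul1r => /(mulIf v_neq0)/esym; rewrite mulrC => /mulr1_eq l_inv.
by apply/is_realC_inv; rewrite l_inv; exists r.
Qed.
End ComplexLines.

Section RationalArguments.
Variable R : realType.
Local Notation C := R[i].

Definition expi (t : R) : C := cos t +i* sin t.

Lemma expiD a b : expi (a + b) = expi a * expi b.
Proof. by rewrite /expi cosD sinD; simpc; congr (_ +i* _); ring. Qed.

Lemma expi0 : expi 0 = 1.
Proof. by rewrite /expi cos0 sin0. Qed.

Lemma expiN t : expi (- t) = (expi t)^-1.
Proof. by apply/esym/mulr1_eq; rewrite -expiD subrr expi0. Qed.

Lemma rational_argE (w : C) :
  rational_arg w <-> exists q r, 0 < r /\ w = r%:C * expi (ratr q * pi).
Proof. by []. Qed.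

Lemma rational_arg_scale (r : R) (w : C) :
  0 < r -> rational_arg w -> rational_arg (r%:C * w).
Proof.
move=> r_gt0 [q [r' [r'_gt0 ->]]]; exists q, (r * r').
by rewrite mulr_gt0 // rmorphM mulrA.
Qed.

Lemma rational_arg_mul (w1 w2 : C) :
  rational_arg w1 -> rational_arg w2 -> rational_arg (w1 * w2).
Proof.
move=> /rational_argE[q1 [r1 [r1_gt0 ->]]] /rational_argE[q2 [r2 [r2_gt0 ->]]].
apply/rational_argE; exists (q1 + q2), (r1 * r2).
by rewrite mulr_gt0 // rmorphD mulrDl expiD rmorphM; split=> //; ring.
Qed.

Lemma rational_arg_inv (w : C) : rational_arg w -> rational_arg w^-1.
Proof.
move=> /rational_argE[q [r [r_gt0 ->]]]; apply/rational_argE; exists (- q), r^-1.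
by rewrite invr_gt0 rmorphN mulNr expiN invfM fmorphV.
Qed.

Lemma ratr_invn (n : nat) : ratr n%:R^-1 = n%:R^-1 :> R.
Proof. by rewrite fmorphV rmorph_nat. Qed.

Lemma rational_arg_i : rational_arg (iC R).
Proof.
exists 2^-1, 1; split=> //.
by rewrite ratr_invn [_^-1 * pi]mulrC cos_pihalf sin_pihalf mul1r.
Qed.

Lemma rational_arg_1i : rational_arg (1 +i* 1 : C).
Proof.
have cos_gt0 : 0 < cos (pi / 4) :> R by rewrite cos_gt0_pihalf //; have := pi_gt0 R; lra.
exists 4^-1, (cos (pi / 4))^-1; split; first by rewrite invr_gt0.
rewrite ratr_invn [_^-1 * pi]mulrC sin_piquarter; simpc.
by rewrite mulVf ?gt_eqF.
Qed.

Lemma rational_arg_pithird : rational_arg (2^-1 +i* (Num.sqrt 3 / 2) : C).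
Proof.
exists 3^-1, 1; split=> //.
by rewrite ratr_invn [_^-1 * pi]mulrC cos_pithird sin_pithird mul1r.
Qed.

Lemma rational_arg_cos2 (x y : R) : rational_arg (x +i* y) ->
  exists q : rat, x ^+ 2 - y ^+ 2 = (x ^+ 2 + y ^+ 2) * cos (ratr q * pi).
Proof.
move=> [q [r [_]]]; set t := ratr q * pi; rewrite -[r%:C]/(r +i* 0); simpc.
move=> -[-> ->]; exists (2 * q); rewrite rmorphM rmorph_nat -mulrA -/t mulr_natl.
by rewrite cos_mulr2n !exprMn sin2cos2; ring.
Qed.

End RationalArguments.

Section QuadraticField.
Variables (R : realType) (d : nat).
Local Notation C := R[i].
Local Notation K := (@Qsqrtm R d).

Lemma ratr_complex (q : rat) : ratr q = (ratr q)%:C :> C.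
Proof. by rewrite (fmorph_rat (real_complex R)). Qed.

Lemma Qsqrtm_coordE (a b : rat) :
  ratr a + ratr b * sqrtm R d = ratr a +i* (ratr b * Num.sqrt d%:R).
Proof. by rewrite !ratr_complex /sqrtm; simpc. Qed.

Lemma sqrtm_sqr : sqrtm R d ^+ 2 = - d%:R.
Proof.
rewrite -(rmorph_nat (real_complex R)) -rmorphN /sqrtm expr2; simpc.
by rewrite -expr2 sqr_sqrtr ?ler0n.
Qed.

Lemma Qsqrtm_rat q : K (ratr q).
Proof. by exists q, 0; rewrite rmorph0 mul0r addr0. Qed.

Lemma Qsqrtm_sqrtm : K (sqrtm R d).
Proof. by exists 0, 1; rewrite rmorph0 rmorph1 mul1r add0r. Qed.

Lemma Qsqrtm_natr n : K n%:R.
Proof. by rewrite -(rmorph_nat (ratr : rat -> C)); exact: Qsqrtm_rat. Qed.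

Lemma Qsqrtm_add x y : K x -> K y -> K (x + y).
Proof.
move=> [a1 [b1 ->]] [a2 [b2 ->]]; exists (a1 + a2), (b1 + b2).
by rewrite !rmorphD; ring.
Qed.

Lemma Qsqrtm_opp x : K x -> K (- x).
Proof. by move=> [a [b ->]]; exists (- a), (- b); rewrite !rmorphN; ring. Qed.

Lemma Qsqrtm_mul x y : K x -> K y -> K (x * y).
Proof.
move=> [a1 [b1 ->]] [a2 [b2 ->]].
exists (a1 * a2 - d%:R * b1 * b2), (a1 * b2 + b1 * a2).
rewrite rmorphB rmorphD !rmorphM rmorph_nat /=.
by rewrite -[d%:R]opprK -sqrtm_sqr; ring.
Qed.

Lemma Qsqrtm_inv x : K x -> K x^-1.
Proof.
move=> [a [b ->]]; set n := a ^+ 2 + d%:R * b ^+ 2.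
exists (a / n), (- b / n); rewrite !Qsqrtm_coordE.
have n_E : ratr n = ratr a ^+ 2 + (ratr b * Num.sqrt d%:R) ^+ 2 :> R.
  rewrite rmorphD rmorphM !rmorphXn rmorph_nat [(_ * Num.sqrt _) ^+ 2]exprMn.
  by rewrite sqr_sqrtr ?ler0n // [d%:R * _]mulrC.
rewrite !fmorph_div rmorphN /= n_E; simpc.
by rewrite -[LHS]/(_ +i* _) [_ * Num.sqrt _ / _]mulrAC.
Qed.

Hypothesis d_gt0 : (0 < d)%N.

Lemma sqrt_natr_gt0 : 0 < Num.sqrt (d%:R : R).
Proof. by rewrite sqrtr_gt0 ltr0n. Qed.

Lemma sqrtm_nonreal : ~ is_realC (sqrtm R d).
Proof. by rewrite is_realCP /= => /eqP; rewrite (gt_eqF sqrt_natr_gt0). Qed.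

Lemma rational_arg_sqrtm : rational_arg (sqrtm R d).
Proof.
have -> : sqrtm R d = (Num.sqrt d%:R)%:C * iC R by rewrite /sqrtm /iC; simpc.
exact: rational_arg_scale sqrt_natr_gt0 (rational_arg_i R).
Qed.

Lemma Qsqrtm_rational_arg_norms (a b : rat) : b != 0 ->
  rational_arg (ratr a + ratr b * sqrtm R d) ->
  [\/ a = 0, 3 * a ^+ 2 = d%:R * b ^+ 2, a ^+ 2 = d%:R * b ^+ 2
     | a ^+ 2 = 3 * (d%:R * b ^+ 2)].
Proof.
move=> b_neq0; rewrite Qsqrtm_coordE => /rational_arg_cos2[q].
set A := a ^+ 2; set B := d%:R * b ^+ 2.
have B_gt0 : 0 < B by rewrite mulr_gt0 ?ltr0n // exprn_even_gt0.
have AB_gt0 : 0 < A + B by rewrite ltr_wpDl ?sqr_ge0.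
have -> : ratr a ^+ 2 = ratr A :> R by rewrite rmorphXn.
have -> : (ratr b * Num.sqrt d%:R) ^+ 2 = ratr B :> R.
  by rewrite exprMn sqr_sqrtr ?ler0n // rmorphM rmorphXn rmorph_nat mulrC.
rewrite -rmorphB -rmorphD => cos_eq.
have /niven : ratr (2 * (A - B) / (A + B)) = 2 * cos (ratr q * pi) :> R.
  rewrite fmorph_div rmorphM rmorph_nat /= cos_eq; field.
  by rewrite -rmorphD /= fmorph_eq0 gt_eqF.
have key t : 2 * (A - B) / (A + B) = t -> 2 * (A - B) = t * (A + B).
  by move=> <-; rewrite divfK ?gt_eqF.
case=> [/key|[/key|[/key|[/key|/key]]]] AB_eq; last by exfalso; lra.
- by constructor 1; apply/eqP; rewrite -sqrf_eq0 -/A; apply/eqP; lra.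
- by constructor 2; lra.
- by constructor 3; lra.
- by constructor 4; lra.
Qed.

Lemma Qsqrtm_rational_arg_coords (a b : rat) : squarefree d -> b != 0 ->
  rational_arg (ratr a + ratr b * sqrtm R d) ->
  [\/ a = 0, d = 1%N /\ (a = b \/ a = - b)
     | d = 3%N /\ [\/ a = 3 * b, a = - (3 * b), a = b | a = - b]].
Proof.
move=> sf_d b_neq0 /(Qsqrtm_rational_arg_norms b_neq0).
have sqr_div (k x : rat) : x ^+ 2 = k * b ^+ 2 -> (x / b) ^+ 2 = k.
  by move=> x2; rewrite expr_div_n x2 mulfK ?expf_neq0.
have sqr_eqP (x y : rat) : x ^+ 2 = y ^+ 2 -> x = y \/ x = - y.
  by move/eqP; rewrite eqf_sqr => /orP[]/eqP; [left | right].
case=> [-> | a2 | a2 | a2]; first by constructor 1.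
- have d3 : d = 3%N.
    apply: (rat_sqr_3squarefree d_gt0 sf_d (x := 3 * a / b)).
    by apply: sqr_div; rewrite natrM -mulrA -a2; ring.
  constructor 3; split=> //; have [] := sqr_eqP a b; last by move=> ->; constructor 4.
    by move: a2; rewrite d3; lra.
  by move=> ->; constructor 3.
- have d1 : d = 1%N.
    by apply: (rat_sqr_squarefree d_gt0 sf_d (x := a / b)); apply: sqr_div.
  by constructor 2; split=> //; apply: sqr_eqP; rewrite a2 d1 mul1r.
- have d3 : d = 3%N.
    apply: (rat_sqr_3squarefree d_gt0 sf_d (x := a / b)).
    by apply: sqr_div; rewrite natrM -mulrA.
  constructor 3; split=> //; have [] := sqr_eqP a (3 * b).
  - by rewrite a2 d3; ring.
  - by move=> ->; constructor 1.
  - by move=> ->; constructor 2.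
Qed.

End QuadraticField.

Section RationalAngles.
Variables (R : realType) (K : R[i] -> Prop).
Local Notation C := R[i].
Hypotheses (K_mul : forall x y, K x -> K y -> K (x * y))
           (K_inv : forall x, K x -> K x^-1).

Definition angle_ratio (w : C) := [/\ K w, ~ is_realC w & rational_arg w].

Lemma angle_ratio_inv w : angle_ratio w -> angle_ratio w^-1.
Proof.
case=> Kw w_nonreal w_arg; split; [exact: K_inv | | exact: rational_arg_inv].
by move=> /is_realC_inv; rewrite invrK.
Qed.

Lemma rational_angleP L1 L2 : rational_angle K L1 L2 <->
  exists v w, [/\ K v, v != 0, angle_ratio w, L1 = line v & L2 = line (w * v)].
Proof.
split=> [[_ [v1 [v2 [Kv1 [Kv2 [v1_neq0 [_ [-> [-> [nonreal arg]]]]]]]]]]|].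
  exists v1, (v2 / v1); split=> //; last by rewrite divfK.
  by split=> //; apply/K_mul/K_inv.
move=> [v [w [Kv v_neq0 [Kw w_nonreal w_arg] -> ->]]].
split; first exact: line_neq.
exists v, (w * v); rewrite mulfK //; do !split=> //; first exact: K_mul.
exact: mulf_neq0 (nonreal_neq0 w_nonreal) v_neq0.
Qed.

Lemma rational_angle_formP (Lam : C -> Prop) :
  (forall l, Lam l -> angle_ratio l) ->
  (forall w, angle_ratio w -> exists c l, [/\ c != 0, Lam l & w = c%:C * l]) ->
  forall L1 L2, rational_angle K L1 L2 <-> angle_of_form K Lam L1 L2.
Proof.
move=> Lam_ratio ratio_Lam L1 L2; rewrite rational_angleP; split.
  move=> [v [w [Kv v_neq0 /ratio_Lam[c [l [c_neq0 Lam_l ->]]] -> ->]]].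
  by exists v, l; do 3 (split=> //); left; rewrite -mulrA line_scale.
move=> [v [l [Kv [v_neq0 [/Lam_ratio l_ratio [[-> ->]|[-> ->]]]]]]].
  by exists v, l.
case: (l_ratio) => Kl /nonreal_neq0 l_neq0 _.
exists (l * v), l^-1; rewrite mulKf //.
by split; [exact: K_mul | exact: mulf_neq0 | exact: angle_ratio_inv | |].
Qed.

End RationalAngles.

Section QuadraticAngles.
Variables (R : realType) (d : nat).
Local Notation C := R[i].
Local Notation K := (@Qsqrtm R d).

Lemma Qsqrtm_rational_angle_formP (Lam : C -> Prop) :
  (forall l, Lam l -> angle_ratio K l) ->
  (forall a b : rat, b != 0 -> rational_arg (ratr a + ratr b * sqrtm R d) ->
     exists c l, [/\ c != 0, Lam l & ratr a + ratr b * sqrtm R d = c%:C * l]) ->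
  forall L1 L2, rational_angle K L1 L2 <-> angle_of_form K Lam L1 L2.
Proof.
move=> Lam_ratio coords_Lam; apply: rational_angle_formP => //.
- exact: Qsqrtm_mul.
- exact: Qsqrtm_inv.
move=> w [[a [b ->]] nonreal arg]; apply: coords_Lam => //.
apply/eqP => b0; apply: nonreal.
by rewrite b0 rmorph0 mul0r addr0 ratr_complex; exists (ratr a).
Qed.

Hypothesis d_gt0 : (0 < d)%N.

Lemma angle_ratio_sqrtm : angle_ratio K (sqrtm R d).
Proof. split; [exact: Qsqrtm_sqrtm | exact: sqrtm_nonreal | exact: rational_arg_sqrtm]. Qed.

Lemma rational_angles_Qsqrtm : squarefree d -> d <> 1%N -> d <> 3%N ->
  forall L1 L2, rational_angle K L1 L2 <-> angle_of_form K (fun l => l = sqrtm R d) L1 L2.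
Proof.
move=> sf_d d_neq1 d_neq3; apply: Qsqrtm_rational_angle_formP => [_ -> | a b b_neq0].
  exact: angle_ratio_sqrtm.
case/(Qsqrtm_rational_arg_coords d_gt0 sf_d b_neq0) => [-> | [/d_neq1] | [/d_neq3]] //.
exists (ratr b), (sqrtm R d); split=> //; first by rewrite fmorph_eq0.
by rewrite rmorph0 add0r ratr_complex.
Qed.

End QuadraticAngles.

Section GaussianAngles.
Variable R : realType.
Local Notation C := R[i].
Local Notation K := (@Qsqrtm R 1).

Lemma sqrtm1 : sqrtm R 1 = iC R.
Proof. by rewrite /sqrtm sqrtr1. Qed.

Lemma rational_angles_Qi L1 L2 : rational_angle K L1 L2 <->
  angle_of_form K (fun l => l = iC R \/ l = iC R + 1 \/ l = iC R - 1) L1 L2.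
Proof.
have Ki : K (iC R) by rewrite -sqrtm1; exact: Qsqrtm_sqrtm.
have K1 : K 1 := Qsqrtm_natr R 1 1.
apply: Qsqrtm_rational_angle_formP => [l [|[|]] -> | a b b_neq0].
- by rewrite -sqrtm1; exact: angle_ratio_sqrtm.
- split; first exact: Qsqrtm_add.
    by rewrite is_realCP /iC; simpc; apply/eqP/oner_neq0.
  by rewrite (_ : _ + 1 = 1 +i* 1); [exact: rational_arg_1i | rewrite /iC; simpc].
- split; first exact/Qsqrtm_add/Qsqrtm_opp.
    by rewrite is_realCP /iC; simpc; apply/eqP/oner_neq0.
  rewrite (_ : _ - 1 = iC R * (1 +i* 1)); last by rewrite /iC; simpc.
  exact: rational_arg_mul (rational_arg_i R) (rational_arg_1i R).
case/(Qsqrtm_rational_arg_coords (d := 1) isT squarefree1 b_neq0)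
  => [-> | [_ [->|->]] | [] //].
all: exists (ratr b); rewrite fmorph_eq0 sqrtm1 ratr_complex.
- by exists (iC R); split=> //; [left | rewrite rmorph0 add0r ratr_complex].
- by exists (iC R + 1); split=> //; [right; left | rewrite /iC; simpc].
- by exists (iC R - 1); split=> //; [right; right | rewrite rmorphN ratr_complex /iC; simpc].
Qed.

End GaussianAngles.

Section EisensteinAngles.
Variable R : realType.
Local Notation C := R[i].
Local Notation K := (@Qsqrtm R 3).

Lemma rational_angles_Qsqrt3 L1 L2 :
  let zeta := (-1 + sqrtm R 3) / 2 in
  rational_angle K L1 L2 <->
  angle_of_form K (fun l => l = sqrtm R 3 \/ l = zeta \/ l = zeta - 1 \/ l = zeta + 1
                            \/ l = zeta + 2) L1 L2.
Proof.
move=> zeta; have sqrtm3_sqr := sqrtm_sqr R 3.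
have z1E : zeta + 1 = 2^-1 +i* (Num.sqrt 3 / 2).
  by rewrite /zeta /sqrtm; simpc; congr (_ +i* _); field.
have shift_ratio (c : R) l : l = zeta + 1 + c%:C -> K l -> rational_arg l -> angle_ratio K l.
  move=> l_eq Kl arg; split=> //; rewrite l_eq z1E is_realCP; simpc.
  by apply/eqP; rewrite gt_eqF ?divr_gt0 ?(@sqrt_natr_gt0 R 3).
have K1 : K 1 := Qsqrtm_natr R 3 1.
have Kz : K zeta.
  apply: Qsqrtm_mul; last exact/Qsqrtm_inv/Qsqrtm_natr.
  by apply: Qsqrtm_add (Qsqrtm_sqrtm R 3); exact: Qsqrtm_opp.
have arg_z1 : rational_arg (zeta + 1) by rewrite z1E; exact: rational_arg_pithird.
have arg_s : rational_arg (sqrtm R 3) := @rational_arg_sqrtm R 3 isT.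
have z1_ratio : angle_ratio K (zeta + 1).
  by apply: (shift_ratio 0); rewrite ?rmorph0 ?addr0 //; exact: Qsqrtm_add.
have z1_neq0 : zeta + 1 != 0 by case: z1_ratio => _ /nonreal_neq0.
apply: Qsqrtm_rational_angle_formP => [l [|[|[|[|]]]] -> | a b b_neq0].
- exact: angle_ratio_sqrtm.
- apply: (shift_ratio (-1)) => //; first by rewrite rmorphN1 addrK.
  have -> : zeta = (zeta + 1) * (zeta + 1) by rewrite /zeta; field: sqrtm3_sqr.
  exact: rational_arg_mul.
- apply: (shift_ratio (-2)); first by rewrite rmorphN rmorph_nat; ring.
    exact/Qsqrtm_add/Qsqrtm_opp.
  have -> : zeta - 1 = sqrtm R 3 * (zeta + 1) by rewrite /zeta; field: sqrtm3_sqr.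
  exact: rational_arg_mul.
- exact: z1_ratio.
- apply: (shift_ratio 1); first by rewrite rmorph1 -addrA.
    exact/Qsqrtm_add/Qsqrtm_natr.
  have -> : zeta + 2 = sqrtm R 3 / (zeta + 1).
    by apply: (canRL (mulfK z1_neq0)); rewrite /zeta; field: sqrtm3_sqr.
  exact/rational_arg_mul/rational_arg_inv.
case/(Qsqrtm_rational_arg_coords (d := 3) isT squarefree3 b_neq0) => [-> | [] // | [_]].
  exists (ratr b), (sqrtm R 3); split; [by rewrite fmorph_eq0 | by left |].
  by rewrite rmorph0 add0r ratr_complex.
have scaleE : (2 * ratr b)%:C = 2 * ratr b :> C by rewrite rmorphM rmorph_nat /= -ratr_complex.
case=> ->; exists (2 * ratr b); rewrite mulf_eq0 pnatr_eq0 fmorph_eq0 (negPf b_neq0) scaleE.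
- exists (zeta + 2); split=> //; first by do 4 right.
  by rewrite rmorphM rmorph_nat /zeta; field.
- exists (zeta - 1); split=> //; first by do 2 right; left.
  by rewrite rmorphN rmorphM rmorph_nat /zeta; field.
- exists (zeta + 1); split=> //; first by do 3 right; left.
  by rewrite /zeta; field.
- exists zeta; split=> //; first by right; left.
  by rewrite rmorphN /zeta; field.
Qed.

End EisensteinAngles.

Section ComplexMultiplication.
Variable R : realType.
Local Notation C := R[i].

Lemma is_CM_homothetic (V W : C -> Prop) : homothetic V W -> is_CM W -> is_CM V.
Proof.
move=> [c [c_neq0 W_cV]] [l [l_irr lW]]; exists l; split=> // z Vz.
have [y [Vy lcz_eq]] : exists y, V y /\ l * (c * z) = c * y by apply/W_cV/lW/W_cV; exists z.
suff -> : l * z = y by [].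
by apply: (mulfI c_neq0); rewrite mulrCA.
Qed.

Lemma is_CM_Qsqrtm d : (0 < d)%N -> is_CM (@Qsqrtm R d).
Proof.
move=> d_gt0; exists (sqrtm R d); split; last by move=> z; apply/Qsqrtm_mul/Qsqrtm_sqrtm.
move=> q sqrtm_q; apply: (@sqrtm_nonreal R d d_gt0).
by rewrite sqrtm_q ratr_complex; exists (ratr q).
Qed.

Lemma CM_basis_quadratic (V : C -> Prop) (e1 e2 l : C) : e1 != 0 ->
  (forall z, V z <-> exists a b : rat, z = ratr a * e1 + ratr b * e2) ->
  (forall q : rat, l <> ratr q) -> (forall z, V z -> V (l * z)) ->
  exists b r D : rat, b != 0 /\ (ratr b * (e2 / e1) + ratr r) ^+ 2 = ratr D.
Proof.
move=> e1_neq0 V_span l_irr lV.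
have [|al [be l_e1]] := iffLR (V_span _) (lV e1 _).
  by apply/V_span; exists 1, 0; rewrite rmorph1 rmorph0 mul1r mul0r addr0.
have [|ga [de l_e2]] := iffLR (V_span _) (lV e2 _).
  by apply/V_span; exists 0, 1; rewrite rmorph1 rmorph0 mul1r mul0r add0r.
have be_neq0 : be != 0.
  apply/eqP=> be0; apply: (l_irr al); apply: (mulIf e1_neq0).
  by rewrite l_e1 be0 rmorph0 mul0r addr0.
set tau := e2 / e1; have e2E : e2 = tau * e1 by rewrite divfK.
have l_eq : l = ratr al + ratr be * tau.
  by apply: (mulIf e1_neq0); rewrite l_e1 e2E; ring.
have tau_quad : (ratr al + ratr be * tau) * tau = ratr ga + ratr de * tau.
  by rewrite -l_eq; apply: (mulIf e1_neq0); rewrite -mulrA -e2E l_e2 e2E; ring.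
(* Complete the square in be tau^2 + (al - de) tau - ga = 0. *)
set r := (al - de) / 2; exists be, r, (r ^+ 2 + be * ga); split=> //.
apply/eqP; rewrite -subr_eq0 -(mulr0 (ratr be)).
rewrite -(subrr ((ratr al + ratr be * tau) * tau)) {2}tau_quad.
rewrite /r !(rmorphD, rmorphN, rmorphM, rmorphXn, fmorphV, rmorph_nat, rmorph1) /=.
by apply/eqP; field.
Qed.
Lemma sqr_real_ge0 (m : C) (D : R) : 0 <= D -> m ^+ 2 = D%:C -> is_realC m.
Proof.
case: m => x y D_ge0; rewrite expr2; simpc => -[x2 xy]; apply/is_realCP => /=.
have /eqP : x * y = 0 by lra.
rewrite mulf_eq0 => /orP[/eqP x0 | /eqP //]; rewrite x0 mul0r sub0r in x2.
by apply/eqP; rewrite -sqrf_eq0 eq_le sqr_ge0 andbT expr2; lra.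
Qed.

Lemma sqr_ratr_cases (m : C) (D : rat) : m ^+ 2 = ratr D -> is_realC m \/
  exists d (k : rat), [/\ (0 < d)%N, squarefree d, k != 0 & m = ratr k * sqrtm R d].
Proof.
move=> mD; have [D_ge0 | D_lt0] := lerP 0 D.
  by left; apply: (sqr_real_ge0 (D := ratr D)); rewrite ?ler0q // -ratr_complex.
right; have [|d [k [d_gt0 sf_d k_neq0 DE]]] := rat_squarefree_decomposition (D := - D).
  by rewrite oppr_gt0.
have : m ^+ 2 = (ratr k * sqrtm R d) ^+ 2.
  by rewrite mD exprMn sqrtm_sqr -[D]opprK DE rmorphN rmorphM rmorph_nat rmorphXn; ring.
move/eqP; rewrite eqf_sqr => /orP[/eqP mE | /eqP mE].
  by exists d, k.
by exists d, (- k); rewrite oppr_eq0 rmorphN mulNr.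
Qed.

Lemma collinear_not_R_indep (e u w : C) (x y : R) :
  u = x%:C * e -> w = y%:C * e -> ~ R_indep u w.
Proof.
move=> -> -> R_ind.
have /R_ind[_ /eqP] : y%:C * (x%:C * e) + (- x)%:C * (y%:C * e) = 0.
  by rewrite rmorphN; ring.
rewrite oppr_eq0 => /eqP x0.
have /R_ind[/eqP] : 1%:C * (x%:C * e) + 0%:C * (y%:C * e) = 0.
  by rewrite x0 !rmorph0 !mul0r mulr0 addr0.
by rewrite oner_eq0.
Qed.

Lemma homothetic_basis_Qsqrtm (V : C -> Prop) (e1 e2 : C) d (a b : rat) :
  e1 != 0 -> b != 0 ->
  (forall z, V z <-> exists p q : rat, z = ratr p * e1 + ratr q * e2) ->
  e2 = (ratr a + ratr b * sqrtm R d) * e1 -> homothetic V (@Qsqrtm R d).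
Proof.
move=> e1_neq0 b_neq0 V_span e2E; have rb_neq0 : ratr b != 0 :> C by rewrite fmorph_eq0.
exists e1^-1; split=> [|z]; first by rewrite invr_eq0.
split=> [[p [q ->]] | [y [/V_span[p [q ->]] ->]]].
  exists ((ratr p + ratr q * sqrtm R d) * e1); split; last by rewrite [RHS]mulrC mulfK.
  apply/V_span; exists (p - q * a / b), (q / b); rewrite e2E.
  by rewrite !(rmorphB, rmorphM, fmorphV) /=; field.
by exists (p + q * a), (q * b); rewrite e2E !(rmorphD, rmorphM) /=; field.
Qed.

Lemma is_space_CM (V : C -> Prop) : is_space V -> is_CM V ->
  exists d, (0 < d)%N /\ squarefree d /\ homothetic V (@Qsqrtm R d).
Proof.
move=> [[e1 [e2 [Q_ind V_span]]] [u [w [Vu [Vw R_ind]]]]] [l [l_irr lV]].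
have e1_neq0 : e1 != 0.
  apply/eqP=> e1_0; have /Q_ind[/eqP] : ratr 1 * e1 + ratr 0 * e2 = 0.
    by rewrite e1_0 rmorph0 mulr0 mul0r addr0.
  by rewrite oner_eq0.
have [b [r [D [b_neq0]]]] := CM_basis_quadratic e1_neq0 V_span l_irr lV.
set m := _ + ratr r => mD.
have rb_neq0 : ratr b != 0 :> C by rewrite fmorph_eq0.
have e2E : e2 = (m - ratr r) / ratr b * e1.
  by rewrite /m addrK [ratr b * _]mulrC mulfK // divfK.
case: (sqr_ratr_cases mD) => [[x mE] | [d [k [d_gt0 sf_d k_neq0 mE]]]].
  exfalso; suff V_line z : V z -> exists t : R, z = t%:C * e1.
    have [[s uE] [t wE]] := (V_line u Vu, V_line w Vw).
    exact: collinear_not_R_indep uE wE R_ind.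
  have tauE : (m - ratr r) / ratr b = ((x - ratr r) / ratr b)%:C.
    by rewrite mE !ratr_complex -rmorphB -fmorphV -rmorphM.
  case/V_span=> [p [q ->]]; rewrite e2E tauE !ratr_complex.
  exists (ratr p + ratr q * ((x - ratr r) / ratr b)).
  by move: (ratr p) (ratr q) ((x - ratr r) / ratr b) => P Q T; rewrite rmorphD rmorphM; ring.
exists d; do 2 split=> //.
apply: (homothetic_basis_Qsqrtm (a := - r / b) (b := k / b) e1_neq0 _ V_span).
  by rewrite mulf_neq0 ?invr_eq0.
by rewrite e2E mE !(rmorphN, rmorphM, fmorphV) /=; field.
Qed.

End ComplexMultiplication.

Theorem theorem4p2 (R : realType) :
  (* (i) *)
  (forall V : R[i] -> Prop, is_space V ->
     (is_CM V <-> exists d : nat, (0 < d)%N /\ squarefree d /\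
                                  homothetic V (@Qsqrtm R d))) /\
  (* (ii) *)
  (forall d : nat, (0 < d)%N -> squarefree d -> d <> 1%N -> d <> 3%N ->
     forall L1 L2 : R[i] -> Prop,
       rational_angle (@Qsqrtm R d) L1 L2 <->
       angle_of_form (@Qsqrtm R d) (fun l => l = @sqrtm R d) L1 L2) /\
  (* (iii) *)
  (forall L1 L2 : R[i] -> Prop,
     rational_angle (@Qsqrtm R 1) L1 L2 <->
     angle_of_form (@Qsqrtm R 1)
       (fun l => l = iC R \/ l = iC R + 1 \/ l = iC R - 1) L1 L2) /\
  (* (iv) *)
  (forall L1 L2 : R[i] -> Prop,
     let zeta := (-1 + @sqrtm R 3) / 2 in
     rational_angle (@Qsqrtm R 3) L1 L2 <->
     angle_of_form (@Qsqrtm R 3)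
       (fun l => l = @sqrtm R 3 \/ l = zeta \/ l = zeta - 1 \/ l = zeta + 1
                 \/ l = zeta + 2) L1 L2).
Proof.
split.
  move=> V V_space; split; first exact: is_space_CM.
  by move=> [d [d_gt0 [_ V_hom]]]; exact: is_CM_homothetic V_hom (is_CM_Qsqrtm R d_gt0).
split; first by move=> d d_gt0 sf_d d_neq1 d_neq3; exact: rational_angles_Qsqrtm.
by split; [exact: rational_angles_Qi | exact: rational_angles_Qsqrt3].
Qed.
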